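(* Let $(C^n)_{n\ge0}$, together with $(\phi^n)_{n\ge 0}$ and $E^n=-\partial_h\phi^n$, be a solution of the fully discrete scheme described in the context, and for each $n\ge0$ denote by $C^{(1,n+1)}_2$ the intermediate coefficient $C^{(1)}_2$ computed in Step 1 when computing $C^{n+1}$ from $C^n$. Then for all $n\ge1$, $$\lambda^2\,\frac{\partial_hE^{n+1}-2\,\partial_hE^{n}+\partial_hE^{n-1}}{\Delta t^2}+\partial_h\big(E^{n+1}C^{n+1}_0\big)=\partial_h^2\Big(\sqrt{2}\,T_0\,C^{(1,n+1)}_2+T_0\,C^{n+1}_0\Big)+\lambda^2\,\Delta t\,\partial_h\Big(\frac{E^{n+1}\,\partial_hE^{n+1}-E^{n}\,\partial_hE^{n}}{\Delta t}\Big).$$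
   Context: Parameters: $T_0>0$, $\lambda>0$, $\Delta t>0$, $N_H\in\mathbb{N}^*$. Mesh: $a<b$, $N_x\in\mathbb{N}^*$, $\mathcal{J}=\{1,\dots,N_x\}$, points $a=x_{1/2}<x_1<x_{3/2}<\dots<x_{N_x}<x_{N_x+1/2}=b$, $\Delta x_j=x_{j+1/2}-x_{j-1/2}$. A grid function is $C=(C_j)_{j\in\mathcal{J}}$, with indices understood periodically. Discrete derivative: $(\partial_h C)_j=(C_{j+1}-C_{j-1})/(2\Delta x_j)$. Products of grid functions are pointwise, $1$ denotes the constant grid function. Scheme: unknowns $C^n=(C^n_k)_{0\le k\le N_H}$ (grid functions), with conventions $C_{-1}=0$ and $C_k=0$ for $k>N_H$. Given $C^n$, Step 1 finds grid functions $C^{(1)}=(C^{(1)}_k)_{0\le k\le N_H}$ and $\phi^{(1)}$ with $\sum_j\Delta x_j\phi^{(1)}_j=0$ such that $\frac{C^{(1)}_1-C^n_1}{\Delta t}+\sqrt{T_0}\,\partial_hC^{(1)}_0+\sqrt{2T_0}\,\partial_hC^{(1)}_2-\frac{1}{\sqrt{T_0}}E^{(1)}=0$, $\frac{C^{(1)}_k-C^n_k}{\Delta t}+\sqrt{kT_0}\,\partial_hC^{(1)}_{k-1}+\sqrt{(k+1)T_0}\,\partial_hC^{(1)}_{k+1}=0$ for $k\in\{0,\dots,N_H\}\setminus\{1\}$, $E^{(1)}=-\partial_h\phi^{(1)}$, $-\lambda^2\partial_h^2\phi^{(1)}=C^{(1)}_0-1$. Step 2 sets $C^{n+1}_0=C^{(1)}_0$,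 $E^{n+1}=E^{(1)}$, $\phi^{n+1}=\phi^{(1)}$, and for $k=1,\dots,N_H$: $\frac{C^{n+1}_k-C^{(1)}_k}{\Delta t}-\sqrt{\frac{k}{T_0}}\,E^{n+1}\big(C^{n+1}_{k-1}-\delta_{k,1}\big)=0$ ($\delta$ the Kronecker symbol). *)

From HB Require Import structures.
From mathcomp Require Import all_boot all_order all_algebra.
From mathcomp Require Import reals.
Set Implicit Arguments. Unset Strict Implicit. Unset Printing Implicit Defensive.
Import Order.TTheory GRing.Theory Num.Theory.
Local Open Scope ring_scope.

(* Grid functions on the periodic mesh J = {1..Nx}, represented by 'I_Nx;
   the neighbours j+1 and j-1 are taken cyclically (ordS / ord_pred). *)
Definition grid (R : realType) (Nx : nat) := 'I_Nx -> R.

Definition dh (R : realType) (Nx : nat) (dx : 'I_Nx -> R) (C : 'I_Nx -> R)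
  : 'I_Nx -> R :=
  fun j => (C (ordS j) - C (ord_pred j)) / (2 * dx j).

Definition coef (R : realType) (Nx NH : nat) (C : nat -> 'I_Nx -> R) (k : nat)
  : 'I_Nx -> R :=
  if (k <= NH)%N then C k else (fun _ => 0).

Definition coefm (R : realType) (Nx NH : nat) (C : nat -> 'I_Nx -> R) (k : nat)
  : 'I_Nx -> R :=
  if k is k'.+1 then coef NH C k' else (fun _ => 0).

Definition Efield (R : realType) (Nx : nat) (dx : 'I_Nx -> R) (phi : 'I_Nx -> R)
  : 'I_Nx -> R := fun j => - dh dx phi j.

Definition poisson (R : realType) (Nx : nat) (lam : R) (dx : 'I_Nx -> R)
  (phi C0 : 'I_Nx -> R) : Prop :=
  (\sum_(j < Nx) dx j * phi j = 0) /\
  (forall j, - lam ^+ 2 * dh dx (dh dx phi) j = C0 j - 1).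

Definition step1 (R : realType) (Nx NH : nat) (T0 lam dt : R) (dx : 'I_Nx -> R)
  (Cn C1 : nat -> 'I_Nx -> R) (phi1 : 'I_Nx -> R) : Prop :=
  let E1 := Efield dx phi1 in
  poisson lam dx phi1 (C1 0%N) /\
  (forall j, (C1 1%N j - Cn 1%N j) / dt
             + Num.sqrt T0 * dh dx (coef NH C1 0) j
             + Num.sqrt (2 * T0) * dh dx (coef NH C1 2) j
             - (Num.sqrt T0)^-1 * E1 j = 0) /\
  (forall k, (k <= NH)%N -> k <> 1%N -> forall j,
      (C1 k j - Cn k j) / dt
      + Num.sqrt (k%:R * T0) * dh dx (coefm NH C1 k) j
      + Num.sqrt ((k.+1)%:R * T0) * dh dx (coef NH C1 k.+1) j = 0).

Definition step2 (R : realType) (Nx NH : nat) (T0 dt : R) (dx : 'I_Nx -> R)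
  (C1 Cnext : nat -> 'I_Nx -> R) (phinext : 'I_Nx -> R) : Prop :=
  let E := Efield dx phinext in
  Cnext 0%N = C1 0%N /\
  (forall k, (1 <= k <= NH)%N -> forall j,
      (Cnext k j - C1 k j) / dt
      - Num.sqrt (k%:R / T0) * E j * (coefm NH Cnext k j - (k == 1%N)%:R) = 0).

(* A solution of the fully discrete scheme: C n = C^n, phi n = phi^n,
   C1 (n+1) = the intermediate C^{(1)} computed when passing from C^n to
   C^{n+1}.  phi^0 is the Poisson potential of C^0_0. *)
Definition scheme_solution (R : realType) (Nx NH : nat) (T0 lam dt : R)
  (dx : 'I_Nx -> R) (C C1 : nat -> nat -> 'I_Nx -> R) (phi : nat -> 'I_Nx -> R)
  : Prop :=
  poisson lam dx (phi 0%N) (C 0%N 0%N) /\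
  forall n, step1 NH T0 lam dt dx (C n) (C1 n.+1) (phi n.+1) /\
            step2 NH T0 dt dx (C1 n.+1) (C n.+1) (phi n.+1).

From mathcomp Require Import all_boot all_order all_algebra.
From mathcomp Require Import reals.
From mathcomp Require Import ring.
Import Order.TTheory GRing.Theory Num.Theory.
Local Open Scope ring_scope.
Set Implicit Arguments. Unset Strict Implicit.

(* The Poisson equation gives the discrete Gauss law lam^2 d_h E = C_0 - 1, so the
   left-hand side starts with the second time difference of C_0.  The k = 0
   equation of Step 1 is a continuity equation (C^{n+1}_0 - C^n_0)/dt =
   -sqrt T0 d_h C^{(1,n+1)}_1, so that second difference is -sqrt T0 d_h of the
   time difference of the fluxes C^{(1)}_1.  The flux difference is obtained by
   chaining the k = 1 equation of Step 2 (from C^{(1,n)}_1 to C^n_1, where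
   C^n_0 - 1 is again replaced by lam^2 d_h E^n) with the k = 1 equation of
   Step 1 (from C^n_1 to C^{(1,n+1)}_1).  Finally E C_0 = E + lam^2 E d_h E
   puts the source term in the stated form. *)

Lemma eq_dh (R : realType) (Nx : nat) (dx f g : 'I_Nx -> R) :
  f =1 g -> dh dx f =1 dh dx g.
Proof. by move=> fg p; rewrite /dh !fg. Qed.

Lemma poisson_gauss (R : realType) (Nx : nat) (lam : R) (dx phi C0 : 'I_Nx -> R) :
  poisson lam dx phi C0 -> forall p, lam ^+ 2 * dh dx (Efield dx phi) p = C0 p - 1.
Proof.
case=> _ poisson_phi p; rewrite -poisson_phi.
by rewrite mulNr -mulrN /Efield /dh; congr (_ * _); ring.
Qed.

Lemma coef_le (R : realType) (Nx NH k : nat) (C : nat -> 'I_Nx -> R) :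
  (k <= NH)%N -> coef NH C k = C k.
Proof. by rewrite /coef => ->. Qed.

Section Scheme.

Variables (R : realType) (T0 lam dt : R) (NH Nx : nat) (dx : 'I_Nx -> R).
Variables (C C1 : nat -> nat -> 'I_Nx -> R) (phi : nat -> 'I_Nx -> R).
Hypotheses (T0_gt0 : 0 < T0) (dt_gt0 : 0 < dt) (NH_gt0 : (0 < NH)%N).
Hypothesis sol : scheme_solution NH T0 lam dt dx C C1 phi.

Local Notation E m := (Efield dx (phi m)).
Local Notation s := (Num.sqrt T0).

Lemma scheme_gauss m p : lam ^+ 2 * dh dx (E m) p = C m 0%N p - 1.
Proof.
case: sol => poisson0 steps; case: m => [|m]; first exact: poisson_gauss.
have [[poisson1 _] [-> _]] := steps m.
exact: poisson_gauss.
Qed.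

Lemma scheme_continuity n p :
  (C n.+1 0%N p - C n 0%N p) / dt = - (s * dh dx (C1 n.+1 1%N) p).
Proof.
have [[_ [_ step1]] [-> _]] := (sol.2 n).
have := step1 0%N (leq0n _) (fun e => ltac:(discriminate)) p.
rewrite /= mul0r sqrtr0 mul0r addr0 mul1r coef_le // => /eqP.
by rewrite addr_eq0 => /eqP.
Qed.

Lemma scheme_flux_step1 n p :
  (C1 n.+1 1%N p - C n 1%N p) / dt
  = s^-1 * E n.+1 p - s * dh dx (C n.+1 0%N) p
    - Num.sqrt 2 * s * dh dx (coef NH (C1 n.+1) 2) p.
Proof.
have [[_ [step1 _]] [C0_eq _]] := (sol.2 n).
have := step1 p; rewrite coef_le // -C0_eq sqrtrM ?ler0n // => step.
by rewrite -[LHS]subr0 -step; ring.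
Qed.

Lemma scheme_flux_step2 n p :
  (C n.+1 1%N p - C1 n.+1 1%N p) / dt = s^-1 * E n.+1 p * (lam ^+ 2 * dh dx (E n.+1) p).
Proof.
have [_ [_ step2]] := (sol.2 n).
have := step2 1%N NH_gt0 p; rewrite /coefm coef_le // eqxx mul1r sqrtrV ?ltW //.
by rewrite scheme_gauss => /eqP; rewrite subr_eq0 => /eqP.
Qed.

Lemma scheme_flux_increment n p :
  (C1 n.+2 1%N p - C1 n.+1 1%N p) / dt
  = s^-1 * E n.+1 p * (lam ^+ 2 * dh dx (E n.+1) p) + s^-1 * E n.+2 p
    - s * dh dx (C n.+2 0%N) p - Num.sqrt 2 * s * dh dx (coef NH (C1 n.+2) 2) p.
Proof.
have -> : (C1 n.+2 1%N p - C1 n.+1 1%N p) / dt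
  = (C1 n.+2 1%N p - C n.+1 1%N p) / dt + (C n.+1 1%N p - C1 n.+1 1%N p) / dt.
  by ring.
by rewrite scheme_flux_step1 scheme_flux_step2; ring.
Qed.

Lemma scheme_second_difference n j :
  lam ^+ 2 * ((dh dx (E n.+2) j - 2 * dh dx (E n.+1) j + dh dx (E n) j) / dt ^+ 2)
  = - (s * dh dx (fun p => (C1 n.+2 1%N p - C1 n.+1 1%N p) / dt) j).
Proof.
have -> : lam ^+ 2 * ((dh dx (E n.+2) j - 2 * dh dx (E n.+1) j + dh dx (E n) j) / dt ^+ 2)
  = ((lam ^+ 2 * dh dx (E n.+2) j - lam ^+ 2 * dh dx (E n.+1) j)
     - (lam ^+ 2 * dh dx (E n.+1) j - lam ^+ 2 * dh dx (E n) j)) / dt ^+ 2 by ring.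
rewrite !scheme_gauss.
have -> : ((C n.+2 0%N j - 1 - (C n.+1 0%N j - 1)) - (C n.+1 0%N j - 1 - (C n 0%N j - 1)))
           / dt ^+ 2
  = ((C n.+2 0%N j - C n.+1 0%N j) / dt - (C n.+1 0%N j - C n 0%N j) / dt) / dt.
  by field; rewrite gt_eqF.
by rewrite !scheme_continuity /dh; ring.
Qed.

End Scheme.

Theorem proposition3p2 (R : realType) (T0 lam dt : R) (NH Nx : nat)
  (dx : 'I_Nx -> R) (C C1 : nat -> nat -> 'I_Nx -> R) (phi : nat -> 'I_Nx -> R) :
  0 < T0 -> 0 < lam -> 0 < dt -> (0 < NH)%N -> (0 < Nx)%N ->
  (forall j, 0 < dx j) ->
  scheme_solution NH T0 lam dt dx C C1 phi ->
  forall n, (1 <= n)%N -> forall j : 'I_Nx,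
    let E := fun m => Efield dx (phi m) in
    lam ^+ 2 * ((dh dx (E n.+1) j - 2 * dh dx (E n) j + dh dx (E n.-1) j) / dt ^+ 2)
    + dh dx (fun i => E n.+1 i * C n.+1 0%N i) j
    = dh dx (dh dx (fun i => Num.sqrt 2 * T0 * coef NH (C1 n.+1) 2 i
                             + T0 * C n.+1 0%N i)) j
      + lam ^+ 2 * dt *
        dh dx (fun i => (E n.+1 i * dh dx (E n.+1) i - E n i * dh dx (E n) i) / dt) j.
Proof.
move=> T0_gt0 _ dt_gt0 NH_gt0 _ dx_gt0 sol [//|n] _ j E.
rewrite /E (scheme_second_difference dt_gt0 NH_gt0 sol).
rewrite (eq_dh dx (scheme_flux_increment T0_gt0 NH_gt0 sol n)).
have source_eq i : Efield dx (phi n.+2) i * C n.+2 0%N i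
    = Efield dx (phi n.+2) i * (1 + lam ^+ 2 * dh dx (Efield dx (phi n.+2)) i).
  by rewrite (scheme_gauss sol); ring.
rewrite (eq_dh dx source_eq) -[in RHS](sqr_sqrtr (ltW T0_gt0)).
have sqrtT0_neq0 : Num.sqrt T0 != 0 by rewrite sqrtr_eq0 -ltNge.
have dx_neq0 p : dx p != 0 by rewrite gt_eqF.
by rewrite /dh; field; rewrite !dx_neq0 sqrtT0_neq0 gt_eqF.
Qed.
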